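(* Let $K$ be a cyclic number field of odd prime degree $\ell$ and prime conductor $f$, and let $\mathcal{N}=\{N(x):x\in\mathcal{O}_K\}\subseteq\mathbb{Z}$. Let $\alpha,\beta$ be nonzero elements of $\mathcal{O}_K$ with $N\beta=f$. Then \[ m_K\!\left(\frac{\alpha}{\beta}\right)\ \ge\ \frac{\min\{|t|: t\in\mathcal{N},\ t\equiv N\alpha\pmod f\}}{f}. \]
   Context: $N=N_{K/\mathbb{Q}}$ is the absolute norm, and for $\xi\in K$, $m_K(\xi)=\inf_{\gamma\in\mathcal{O}_K}|N(\xi-\gamma)|$. *)

From HB Require Import structures.
From mathcomp Require Import all_boot all_order all_algebra all_fingroup all_solvable all_field.
Set Implicit Arguments. Unset Strict Implicit. Unset Printing Implicit Defensive.
Import Order.TTheory GRing.Theory Num.Theory.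
Local Open Scope ring_scope.

(* A number field Galois over Q is modelled as L : splittingFieldType rat. *)

Definition integral (L : splittingFieldType rat) (x : L) : Prop :=
  exists p : {poly int}, p \is monic /\ root (map_poly (fun z : int => z%:~R) p) x.

(* absolute norm N_{K/Q}(x) as a rational: galNorm 1 fullv x lies in 1%VS = Q*1;
   we take its coordinate on the basis [1]. *)
Definition normK (L : splittingFieldType rat) (x : L) : rat :=
  coord [tuple (1 : L)] ord0 (galNorm 1 fullv x).

Definition in_cyclotomic (L : splittingFieldType rat) (n : nat) : Prop :=
  exists (iota : {rmorphism L -> algC}) (z : algC),
    n.-primitive_root z /\
    forall x : L, exists p : {poly rat}, iota x = (map_poly ratr p).[z].

Definition is_conductor (L : splittingFieldType rat) (f : nat) : Prop :=
  (0 < f)%N /\ in_cyclotomic L f /\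
  forall m : nat, (0 < m)%N -> in_cyclotomic L m -> (f <= m)%N.

Definition in_norm_set (L : splittingFieldType rat) (t : int) : Prop :=
  exists x : L, integral x /\ normK x = t%:~R.

Definition is_min_res (L : splittingFieldType rat) (f : nat) (a : L) (m : int) : Prop :=
  (exists t : int, in_norm_set L t /\ (exists k : int, t%:~R - normK a = (k * f%:Z)%:~R)
                   /\ `|t| = m) /\
  forall t : int, in_norm_set L t -> (exists k : int, t%:~R - normK a = (k * f%:Z)%:~R) ->
                  m <= `|t|.

(* c <= m_K(xi) = inf_{gamma in O_K} |N(xi - gamma)|, i.e. c is a lower bound. *)
Definition mK_ge (L : splittingFieldType rat) (xi : L) (c : rat) : Prop :=
  forall g : L, integral g -> c <= `|normK (xi - g)|.

From HB Require Import structures.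
From mathcomp Require Import all_boot all_order all_algebra all_fingroup all_solvable all_field.
From mathcomp Require Import zify ring.
Set Implicit Arguments. Unset Strict Implicit. Unset Printing Implicit Defensive.
Import Order.TTheory GRing.Theory Num.Theory.
Local Open Scope ring_scope.

(* Embed K in Q(zeta), zeta a primitive f-th root of unity, and let
   lambda = 1 - zeta, the prime above f, with residue field F_f.  Every
   algebraic integer of Q(zeta) is congruent to a rational integer c modulo
   lambda; for beta, f = N(beta) = c^[K:Q] modulo lambda forces f | c, so
   lambda | beta.  Hence for gamma in O_K, y = alpha - beta gamma and all its
   conjugates are congruent to those of alpha, so N(y) = N(alpha) modulo f,
   N(y) competes in the minimum m, and |N(alpha/beta - gamma)| = |N(y)|/f.
   Only the primality of f and K in Q(zeta) are used. *)

Definition dvdA (e x : algC) : Prop := exists2 w, w \in Aint & x = e * w.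

Lemma dvdA0 e : dvdA e 0.
Proof. by exists 0; rewrite ?mulr0 ?rpred0. Qed.

Lemma dvdA_mulr e y : y \in Aint -> dvdA e (e * y).
Proof. by exists y. Qed.

Lemma dvdAMr e x y : dvdA e x -> y \in Aint -> dvdA e (x * y).
Proof. by case=> w wA -> yA; exists (w * y); rewrite ?mulrA ?rpredM. Qed.

Lemma dvdAMl e x y : dvdA e x -> y \in Aint -> dvdA e (y * x).
Proof. by rewrite mulrC; apply: dvdAMr. Qed.

Lemma dvdAD e x y : dvdA e x -> dvdA e y -> dvdA e (x + y).
Proof. by case=> w wA -> [v vA ->]; exists (w + v); rewrite ?mulrDr ?rpredD. Qed.

Lemma dvdAN e x : dvdA e x -> dvdA e (- x).
Proof. by case=> w wA ->; exists (- w); rewrite ?mulrN ?rpredN. Qed.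

Lemma dvdAB e x y : dvdA e x -> dvdA e y -> dvdA e (x - y).
Proof. by move=> ex ey; apply: dvdAD ex (dvdAN ey). Qed.

Lemma dvdA_trans a b c : dvdA a b -> dvdA b c -> dvdA a c.
Proof. by case=> w wA -> [v vA ->]; exists (w * v); rewrite ?mulrA ?rpredM. Qed.

Lemma dvdA_exp x m n : x \in Aint -> (m <= n)%N -> dvdA (x ^+ m) (x ^+ n).
Proof. by move=> xA /subnK <-; rewrite addnC exprD; apply/dvdA_mulr/rpredX. Qed.

Lemma dvdA_mul2r e x y : y != 0 -> dvdA (e * y) (x * y) -> dvdA e x.
Proof. by move=> y0 [w wA E]; exists w => //; apply: (mulIf y0); rewrite E mulrAC. Qed.

Lemma dvdA_prod I (r : seq I) (P : pred I) (E F : I -> algC) :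
  (forall i, P i -> dvdA (E i) (F i)) ->
  dvdA (\prod_(i <- r | P i) E i) (\prod_(i <- r | P i) F i).
Proof.
move=> EF; elim/big_rec2: _ => [|i x y /EF[w wA ->] [v vA ->]].
  by exists 1; rewrite ?mulr1 ?rpred1.
by exists (w * v); rewrite ?rpredM // mulrACA.
Qed.

Lemma dvdA_aut (nu : {rmorphism algC -> algC}) e x : dvdA e x -> dvdA (nu e) (nu x).
Proof. by case=> w wA ->; exists (nu w); rewrite ?rmorphM ?Aint_aut. Qed.

Lemma dvdA_subX1 x k : x \in Aint -> dvdA (1 - x) (1 - x ^+ k).
Proof.
move=> xA; exists (\sum_(i < k) x ^+ i); first by apply/rpred_sum => i _; apply: rpredX.
by rewrite -opprB subrX1 -mulNr opprB.
Qed.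

Lemma dvdA_intr (a b : int) : a != 0 -> dvdA a%:~R b%:~R -> (a %| b)%Z.
Proof.
move=> a0 [w wA Db].
have a0' : a%:~R != 0 :> algC by rewrite intr_eq0.
have wQ : w \in Crat by rewrite -(mulKf a0' w) -Db rpredM ?rpredV ?rpred_int.
have /intrP[k Dw] := Cint_rat_Aint wQ wA.
by apply/dvdzP; exists k; apply: (@intr_inj algC); rewrite Db Dw intrM mulrC.
Qed.

Lemma Aint_horner_int (Q : {poly int}) x : x \in Aint -> (map_poly intr Q).[x] \in Aint.
Proof.
move=> xA; elim/poly_ind: Q => [|Q c QA]; first by rewrite rmorph0 horner0 rpred0.
by rewrite rmorphD rmorphM /= map_polyX map_polyC hornerMXaddC rpredD ?rpredM ?rpred_int.
Qed.

Lemma dvdA_horner_coef0 (Q : {poly int}) x : x \in Aint ->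
  dvdA x ((map_poly intr Q).[x] - (Q`_0)%:~R).
Proof.
move=> xA; elim/poly_ind: Q => [|Q c _]; first by rewrite rmorph0 horner0 coef0 subr0; apply: dvdA0.
rewrite rmorphD rmorphM /= map_polyX map_polyC hornerMXaddC coefD coefMX coefC /=.
by rewrite add0r addrK mulrC; apply/dvdA_mulr/Aint_horner_int.
Qed.

Section PrimeCyclotomic.
Variables (f : nat) (z : algC).
Hypotheses (f_prime : prime f) (z_prim : f.-primitive_root z).

Local Notation lam := (1 - z).

Let z_Aint : z \in Aint. Proof. exact: Aint_prim_root z_prim. Qed.
Let lam_Aint : lam \in Aint. Proof. by rewrite rpredB ?rpred1. Qed.
Let f_gt1 : (1 < f)%N. Proof. exact: prime_gt1. Qed.

Lemma lam_neq0 : lam != 0.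
Proof.
rewrite subr_eq0; apply: contraTneq f_gt1 => z1.
by have := prim_order_dvd z_prim 1; rewrite expr1 -z1 eqxx dvdn1 => /eqP->.
Qed.

Lemma natr_prod_sub_prim_root : f%:R = \prod_(1 <= k < f) (1 - z ^+ k).
Proof.
have := factor_Xn_sub_1 z_prim; rewrite subrX1 big_ltn ?prime_gt0 // expr0 => Xn1.
have cyclo : \prod_(1 <= i < f) ('X - (z ^+ i)%:P) = \sum_(i < f) 'X^i :> {poly algC}.
  by apply: (mulfI (x := 'X - 1%:P)); rewrite ?Xn1 // -size_poly_eq0 size_XsubC.
have sum1 : \sum_(i < f) ('X^i : {poly algC}).[1] = f%:R.
  by under eq_bigr do rewrite hornerXn expr1n; rewrite sumr_const card_ord.
have := congr1 (horner^~ 1) cyclo; rewrite /= horner_prod horner_sum sum1 => <-.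
by apply: eq_bigr => i _; rewrite hornerXsubC.
Qed.

Lemma dvdA_lam_prime : dvdA (lam ^+ f.-1) f%:R.
Proof.
rewrite natr_prod_sub_prim_root -subn1 -(prodr_const_nat 1 f lam).
rewrite big_seq_cond [X in dvdA _ X]big_seq_cond.
by apply: dvdA_prod => k _; apply: dvdA_subX1.
Qed.

Lemma dvdA_lam_natr : dvdA lam f%:R.
Proof.
apply: dvdA_trans dvdA_lam_prime; rewrite -[X in dvdA X]expr1.
by apply: dvdA_exp; rewrite // -ltnS prednK ?prime_gt0.
Qed.

(* Applying the conjugations zeta |-> zeta^k turns lam | q into f | q^(f-1). *)
Lemma dvdA_lam_int (q : int) : dvdA lam q%:~R -> (f%:Z %| q)%Z.
Proof.
move=> lam_q.
have f_qn : dvdA f%:R (q%:~R ^+ f.-1).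
  rewrite natr_prod_sub_prim_root -subn1 -(prodr_const_nat 1 f).
  rewrite big_seq_cond [X in dvdA _ X]big_seq_cond.
  apply: dvdA_prod => k /andP[]; rewrite mem_index_iota => /andP[k_gt0 k_ltf] _.
  have : coprime k f by rewrite coprime_sym prime_coprime // gtnNdvd.
  case/Qn_aut_exists => tau Dtau.
  have := dvdA_aut tau lam_q.
  by rewrite rmorphB rmorph1 (Dtau z (prim_expr_order z_prim)) rmorph_int.
have f0 : f%:Z != 0 by rewrite eqz_nat -lt0n prime_gt0.
have := @dvdA_intr f%:Z (q ^+ f.-1) f0; rewrite rmorphXn => /(_ f_qn).
by rewrite !dvdzE abszX Euclid_dvdX // => /andP[].
Qed.

Lemma lam_exp_dvdA_coef k (Q : {poly int}) : (k <= f.-1)%N -> (size Q <= k)%N ->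
  dvdA (lam ^+ k) (map_poly intr Q).[lam] -> forall i, (f%:Z %| Q`_i)%Z.
Proof.
elim: k Q => [|k IH] Q k_lt.
  by rewrite leqn0 size_poly_eq0 => /eqP-> _ i; rewrite coef0 dvdz0.
elim/poly_ind: Q => [|Q c _] size_Q lam_Q; first by move=> i; rewrite coef0 dvdz0.
move: lam_Q; rewrite rmorphD rmorphM /= map_polyX map_polyC hornerMXaddC /= => lam_Q.
have f_c : (f%:Z %| c)%Z.
  apply: dvdA_lam_int.
  have -> : c%:~R = (map_poly intr Q).[lam] * lam + c%:~R - lam * (map_poly intr Q).[lam].
    by ring.
  apply: dvdAB; last exact/dvdA_mulr/Aint_horner_int.
  by apply: dvdA_trans lam_Q; rewrite -[X in dvdA X]expr1; apply: dvdA_exp.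
have lam_QX : dvdA (lam ^+ k * lam) ((map_poly intr Q).[lam] * lam).
  rewrite -exprSr -[X in dvdA _ X](addrK c%:~R); apply: dvdAB => //.
  case/dvdzP: f_c => c' ->; rewrite intrM mulrC -pmulrn.
  by apply: dvdAMr (rpred_int _ _); apply: dvdA_trans (dvdA_exp _ _) dvdA_lam_prime.
have size_Q' : (size Q <= k)%N.
  by move: size_Q; rewrite size_MXaddC; case: eqP => [->|_]; rewrite ?size_poly0 //= ltnS.
have := IH Q (ltnW k_lt) size_Q' (dvdA_mul2r lam_neq0 lam_QX).
by move=> fQ [|i]; rewrite coefD coefMX coefC //= ?add0r ?addr0.
Qed.

(* x is congruent to y modulo lambda up to a denominator prime to f; working
   in this localization avoids knowing that Z[zeta] is the ring of integers. *)
Definition lam_cong (x y : algC) : Prop :=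
  exists2 s : int, ~~ (f%:Z %| s)%Z & dvdA lam (s%:~R * (x - y)).

Lemma lam_cong_dvdA x y : dvdA lam (x - y) -> lam_cong x y.
Proof.
by exists 1; rewrite ?mul1r // dvdzE /= dvdn1; apply: contraTneq f_gt1 => ->.
Qed.

Lemma lam_cong_refl x : lam_cong x x.
Proof. by apply: lam_cong_dvdA; rewrite subrr; apply: dvdA0. Qed.

Let ndvdzM (s1 s2 : int) : ~~ (f%:Z %| s1)%Z -> ~~ (f%:Z %| s2)%Z -> ~~ (f%:Z %| s1 * s2)%Z.
Proof. by rewrite !dvdzE abszM /= Euclid_dvdM // => /negbTE-> /negbTE->. Qed.

Lemma lam_congB x1 y1 x2 y2 : lam_cong x1 y1 -> lam_cong x2 y2 -> lam_cong (x1 - x2) (y1 - y2).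
Proof.
move=> [s1 n1 d1] [s2 n2 d2]; exists (s1 * s2); first exact: ndvdzM.
have -> : (s1 * s2)%:~R * (x1 - x2 - (y1 - y2)) =
  s1%:~R * (x1 - y1) * s2%:~R - s2%:~R * (x2 - y2) * s1%:~R :> algC by rewrite intrM; ring.
by apply: dvdAB; apply: dvdAMr (rpred_int _ _).
Qed.

Lemma lam_cong_trans x y w : lam_cong x y -> lam_cong y w -> lam_cong x w.
Proof.
move=> [s1 n1 d1] [s2 n2 d2]; exists (s1 * s2); first exact: ndvdzM.
have -> : (s1 * s2)%:~R * (x - w) =
  s1%:~R * (x - y) * s2%:~R + s2%:~R * (y - w) * s1%:~R :> algC by rewrite intrM; ring.
by apply: dvdAD; apply: dvdAMr (rpred_int _ _).
Qed.

Lemma lam_congM x1 y1 x2 y2 : x2 \in Aint -> y1 \in Aint ->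
  lam_cong x1 y1 -> lam_cong x2 y2 -> lam_cong (x1 * x2) (y1 * y2).
Proof.
move=> x2A y1A [s1 n1 d1] [s2 n2 d2]; exists (s1 * s2); first exact: ndvdzM.
have -> : (s1 * s2)%:~R * (x1 * x2 - y1 * y2) =
  s1%:~R * (x1 - y1) * (s2%:~R * x2) + s2%:~R * (x2 - y2) * (s1%:~R * y1) :> algC.
  by rewrite intrM; ring.
by apply: dvdAD; apply: dvdAMr; rewrite // rpredM ?rpred_int.
Qed.

Lemma lam_cong_prod I (r : seq I) (P : pred I) (X Y : I -> algC) :
  (forall i, P i -> [/\ X i \in Aint, Y i \in Aint & lam_cong (X i) (Y i)]) ->
  lam_cong (\prod_(i <- r | P i) X i) (\prod_(i <- r | P i) Y i).
Proof.
move=> XY; suff [] : [/\ \prod_(i <- r | P i) X i \in Aint, \prod_(i <- r | P i) Y i \in Aint &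
  lam_cong (\prod_(i <- r | P i) X i) (\prod_(i <- r | P i) Y i)] by [].
apply: (big_ind2 (fun a b => [/\ a \in Aint, b \in Aint & lam_cong a b])) => //.
  by split; [exact: rpred1 | exact: rpred1 | exact: lam_cong_refl].
move=> x1 x2 y1 y2 [x1A x2A c1] [y1A y2A c2].
by split; [exact: rpredM | exact: rpredM | exact: lam_congM].
Qed.

(* Automorphisms of algC send zeta to a power of zeta, hence lam to a multiple of lam. *)
Lemma lam_cong_aut (nu : {rmorphism algC -> algC}) x y : lam_cong x y -> lam_cong (nu x) (nu y).
Proof.
case=> s ns /(dvdA_aut nu); rewrite rmorphM rmorphB rmorph_int rmorphB rmorph1 => d.
exists s => //; apply: dvdA_trans d.
have : nu z ^+ f = 1 by rewrite -rmorphXn prim_expr_order // rmorph1.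
by case/(prim_rootP z_prim) => i ->; apply: dvdA_subX1.
Qed.

Lemma lam_cong_int_dvdz (a b : int) : lam_cong a%:~R b%:~R -> (f%:Z %| a - b)%Z.
Proof.
case=> s ns; rewrite -intrB -intrM => /dvdA_lam_int.
by move: ns; rewrite !dvdzE abszM /= Euclid_dvdM // => /negbTE->.
Qed.

Lemma lam_cong_int_of_coprime (Q : {poly int}) (a : int) (y : algC) :
  ~~ (f%:Z %| a)%Z -> a%:~R * y = (map_poly intr Q).[lam] -> exists c : int, lam_cong y c%:~R.
Proof.
move=> na Dy; have : coprimez a f by rewrite coprimezE coprime_sym prime_coprime // -dvdzE.
case/coprimezP=> [[u v] /= Duv]; exists (u * Q`_0), a => //.
have -> : a%:~R * (y - (u * Q`_0)%:~R) =
  ((map_poly intr Q).[lam] - (Q`_0)%:~R) + f%:R * (v * Q`_0)%:~R :> algC.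
  have Ea : a * (u * Q`_0) = Q`_0 - f%:Z * (v * Q`_0).
    by rewrite -[X in _ = X - _]mul1r -Duv; ring.
  by rewrite mulrBr -Dy -intrM Ea intrB intrM -pmulrn; ring.
by apply: dvdAD (dvdA_horner_coef0 _ lam_Aint) (dvdAMr dvdA_lam_natr (rpred_int _ _)).
Qed.

(* Descent on the denominator a: if f | a then lam^(f-1) | Q(lam), so f divides Q. *)
Lemma lam_cong_int_scaled (y : algC) (a : int) (Q : {poly int}) : y \in Aint ->
  a != 0 -> (size Q <= f.-1)%N -> a%:~R * y = (map_poly intr Q).[lam] ->
  exists c : int, lam_cong y c%:~R.
Proof.
move=> yA; have [k] := ubnP `|a|%N; elim: k a Q => // k IH a Q a_lt a0 size_Q Dy.
have [/dvdzP[a' Da]|na] := boolP (f%:Z %| a)%Z; last exact: lam_cong_int_of_coprime Dy.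
have a'0 : a' != 0 by apply: contraNneq a0; rewrite Da => ->; rewrite mul0r.
have f_Q : forall i, (f%:Z %| Q`_i)%Z.
  apply: lam_exp_dvdA_coef size_Q _ => //; rewrite -Dy Da intrM mulrAC -pmulrn mulrC.
  by apply: dvdAMr dvdA_lam_prime _; rewrite rpredM ?rpred_int.
pose Q' := \poly_(i < size Q) (Q`_i %/ f%:Z)%Z.
have DQ : Q = f%:Z *: Q'.
  apply/polyP => i; rewrite coefZ coef_poly.
  by case: ltnP => i_lt; [rewrite mulrC divzK | rewrite mulr0 nth_default].
apply: (IH a' Q') => //.
- by move: a_lt; rewrite Da abszM /= -absz_gt0 in a'0 *; nia.
- exact: leq_trans (size_poly _ _) size_Q.
- have f0 : f%:R != 0 :> algC by rewrite pnatr_eq0 -lt0n prime_gt0.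
  apply: (mulfI f0); rewrite [in RHS]pmulrn -hornerZ -map_polyZ -DQ -Dy Da intrM -pmulrn.
  ring.
Qed.

Lemma horner_prim_root_lam (p : {poly rat}) :
  exists2 P : {poly rat}, (size P <= f.-1)%N & (map_poly ratr p).[z] = (map_poly ratr P).[lam].
Proof.
pose g := \poly_(i < f) (1 : rat).
have size_g : size g = f by apply: size_poly_eq; apply: oner_neq0.
have g_z : (map_poly ratr g).[z] = 0.
  rewrite (@horner_coef_wide _ f) ?size_map_poly ?size_g //.
  under eq_bigr do rewrite coef_map coef_poly ltn_ord /= rmorph1 mul1r.
  have z1 : z - 1 != 0 by rewrite -opprB oppr_eq0 lam_neq0.
  by apply: (mulfI z1); rewrite mulr0 -subrX1 prim_expr_order // subrr.
exists ((p %% g) \Po (1 - 'X)).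
  have size_1X : size (1 - 'X : {poly rat}) = 2.
    by rewrite -opprB size_polyN -polyCN size_XaddC.
  rewrite size_comp_poly2 // -ltnS prednK ?prime_gt0 // -size_g ltn_modp.
  by rewrite -size_poly_eq0 size_g -lt0n prime_gt0.
rewrite map_comp_poly horner_comp rmorphB rmorph1 /= map_polyX !hornerE opprB addrC subrK.
by rewrite {1}(divp_eq p g) rmorphD rmorphM hornerD hornerM g_z mulr0 add0r.
Qed.

Lemma Aint_lam_cong_int (p : {poly rat}) (y : algC) : y \in Aint ->
  y = (map_poly ratr p).[z] -> exists c : int, lam_cong y c%:~R.
Proof.
move=> yA Dy; have [P size_P DyP] := horner_prim_root_lam p; rewrite DyP in Dy.
have [Q [a a0 DP]] := rat_poly_scale P.
apply: (@lam_cong_int_scaled _ a Q) => //.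
- by apply: leq_trans _ size_P; rewrite DP size_scale ?invr_eq0 ?intr_eq0 // size_rat_int_poly.
- rewrite Dy DP map_polyZ hornerZ /= fmorphV rmorph_int mulVKf ?intr_eq0 //.
  by rewrite -map_poly_comp; congr (horner _ _); apply: eq_map_poly => x /=; rewrite ratr_int.
Qed.

End PrimeCyclotomic.

Section NumberField.
Variables (L : splittingFieldType rat) (iota : {rmorphism L -> algC}).
Hypothesis L_galois : galois 1 {:L}.

Lemma integral_Aint (x : L) : integral x -> iota x \in Aint.
Proof.
case=> p [p_monic p_root]; apply: (@root_monic_Aint (map_poly intr p)).
- move: p_root; rewrite /root -(fmorph_eq0 iota) -horner_map -map_poly_comp.
  by rewrite (eq_map_poly (rmorph_int iota)).
- by rewrite monicE lead_coef_map_inj ?(monicP p_monic) ?rmorph1 //; apply: intr_inj.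
- by apply/polyOverP => i; rewrite coef_map rpred_int.
Qed.

Lemma Aint_integral (x : L) : iota x \in Aint -> integral x.
Proof.
move=> xA; have /floorpP[p Dp] : minCpoly (iota x) \is a polyOver Num.int by [].
exists p; split.
  have := minCpoly_monic (iota x); rewrite Dp !monicE lead_coef_map_inj //.
    by rewrite -(inj_eq (@intr_inj algC)) rmorph1.
  exact: intr_inj.
rewrite /root -(fmorph_eq0 iota) -horner_map -map_poly_comp.
by rewrite (eq_map_poly (rmorph_int iota)) -Dp; apply: root_minCpoly.
Qed.

Lemma galNorm_normK (x : L) : galNorm 1 fullv x = (normK x)%:A.
Proof.
have : galNorm 1 fullv x \in <<[tuple (1%R : L)]>>%VS.
  by rewrite span_seq1 mem_galNorm ?memvf.
by move/coord_span; rewrite big_ord1.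
Qed.

Lemma normKM (x y : L) : normK (x * y) = normK x * normK y.
Proof. by apply: (fmorph_inj (in_alg L)); rewrite rmorphM /= -!galNorm_normK galNormM. Qed.

Lemma normKV (x : L) : normK x^-1 = (normK x)^-1.
Proof. by apply: (fmorph_inj (in_alg L)); rewrite fmorphV /= -!galNorm_normK galNormV. Qed.

Lemma ratr_normK (x : L) : ratr (normK x) = \prod_(s in 'Gal({:L} / 1)%g) iota (s x).
Proof. by rewrite -rmorph_prod -/(galNorm 1 fullv x) galNorm_normK rmorphZ_num rmorph1 mulr1. Qed.

Lemma iota_gal (s : gal_of {:L}) :
  exists nu : {rmorphism algC -> algC}, forall x, iota (s x) = nu (iota x).
Proof. by have [nu Dnu] := extend_algC_subfield_aut iota s; exists nu. Qed.

Lemma normK_int (x : L) : integral x -> exists t : int, normK x = t%:~R.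
Proof.
move=> xI; have : ratr (normK x) \in Aint.
  rewrite ratr_normK; apply: rpred_prod => s _.
  by have [nu ->] := iota_gal s; rewrite Aint_aut integral_Aint.
by move/(Cint_rat_Aint (Crat_rat _)); rewrite Cint_rat => /intrP[t ->]; exists t.
Qed.

Variables (f : nat) (z : algC).
Hypotheses (f_prime : prime f) (z_prim : f.-primitive_root z).
Hypothesis L_cyclotomic : forall x : L, exists p : {poly rat}, iota x = (map_poly ratr p).[z].

Lemma lam_cong_normK (x y : L) : integral x -> integral y ->
  lam_cong f z (iota x) (iota y) -> lam_cong f z (ratr (normK x)) (ratr (normK y)).
Proof.
move=> xI yI xy; rewrite !ratr_normK; apply: lam_cong_prod => // s _.
have [nu Dnu] := iota_gal s; rewrite !Dnu !Aint_aut !integral_Aint //.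
by split=> //; apply: lam_cong_aut.
Qed.

Lemma lam_cong0_of_normK_prime (x : L) : integral x -> normK x = f%:R -> lam_cong f z (iota x) 0.
Proof.
move=> xI Nx; have [p Dx] := L_cyclotomic x.
have [c xc] := Aint_lam_cong_int f_prime z_prim (integral_Aint xI) Dx.
have cI : integral (c%:~R : L) by apply: Aint_integral; rewrite rmorph_int rpred_int.
have Nc : ratr (normK (c%:~R : L)) = (c ^+ #|'Gal({:L} / 1)%g|)%:~R :> algC.
  rewrite ratr_normK rmorphXn -prodr_const; apply: eq_bigr => s _.
  by have [nu ->] := iota_gal s; rewrite !rmorph_int.
have := lam_cong_normK xI cI; rewrite rmorph_int Nx ratr_nat Nc pmulrn => /(_ xc).
move/(lam_cong_int_dvdz f_prime z_prim).
rewrite rpredBl ?dvdzz // !dvdzE abszX Euclid_dvdX // => /andP[f_c _].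
apply: (lam_cong_trans f_prime xc (lam_cong_dvdA f_prime _)); rewrite subr0.
case/dvdzP: (f_c : (f%:Z %| c)%Z) => c' ->; rewrite intrM -pmulrn.
by apply: dvdAMl (dvdA_lam_natr f_prime z_prim) _; rewrite rpred_int.
Qed.

End NumberField.

Theorem mainTheorem9 (L : splittingFieldType rat) (l f : nat)
  (hl : prime l) (hlodd : odd l) (hdim : \dim {:L} = l)
  (hgal : galois 1 {:L}) (hcyc : cyclic 'Gal({:L} / 1))
  (hf : prime f) (hcond : is_conductor L f)
  (alpha beta : L) (ha0 : alpha != 0) (hb0 : beta != 0)
  (ha : integral alpha) (hb : integral beta) (hNb : normK beta = f%:R)
  (m : int) (hm : is_min_res f alpha m) :
  mK_ge (alpha / beta) (m%:~R / f%:R).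
Proof.
move=> g gI; case: hcond => _ [[iota [z [z_prim L_cyc]]] _].
pose y := alpha - beta * g.
have yI : integral y.
  by apply: (@Aint_integral _ iota); rewrite rmorphB rmorphM rpredB ?rpredM ?integral_Aint.
have [t Ny] := normK_int iota hgal yI; have [ta Na] := normK_int iota hgal ha.
have beta0 := lam_cong0_of_normK_prime hgal hf z_prim L_cyc hb hNb.
have y_alpha : lam_cong f z (iota y) (iota alpha).
  rewrite -[iota alpha]subr0 rmorphB rmorphM /= -(mul0r (iota g)).
  apply: lam_congB => //; first exact: lam_cong_refl.
  apply: lam_congM => //; [exact: integral_Aint | exact: lam_cong_refl].
have f_t : (f%:Z %| t - ta)%Z.
  apply: (lam_cong_int_dvdz hf z_prim).
  by have := lam_cong_normK hgal hf z_prim yI ha y_alpha; rewrite Ny Na !ratr_int.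
have m_t : m <= `|t|.
  apply: hm.2; first by exists y.
  by exists ((t - ta) %/ f%:Z)%Z; rewrite divzK // Na intrB.
have -> : alpha / beta - g = y / beta by rewrite /y; field.
rewrite normKM // normKV // Ny hNb normrM normfV normr_nat -intr_norm.
by rewrite ler_pM2r ?invr_gt0 ?ltr0n ?prime_gt0 // ler_int.
Qed.
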